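(* Let $I\subset\mathbb{R}$ be an open interval, let $\bm{a}:I\to\mathbb{R}^2_1$ be a spacelike frontal with Gauss mapping $\bm{\nu}:I\to H^1$, and let $r:I\to\mathbb{R}^+$ be a positive constant function. If $\bm{a}$ is not constant (i.e. its image is not a single point), then the pseudo-circle family $C_{(\bm{a}(t),r(t))}$ does not create an envelope.
   Context: All objects are $C^\infty$. The Minkowski plane $\mathbb{R}^2_1$ is $\mathbb{R}^2$ with $\langle\bm{x},\bm{y}\rangle=-x_1y_1+x_2y_2$; $H^1=\{\bm{x}:\langle\bm{x},\bm{x}\rangle=-1\}$. A smooth $\bm{a}:I\to\mathbb{R}^2_1$ is a spacelike frontal if there is a smooth $\bm{\nu}:I\to H^1$ (Gauss mapping) with $\langle\frac{d\bm{a}}{dt}(t),\bm{\nu}(t)\rangle=0$ for all $t$. $C_{(\bm{a}(t),r(t))}=\{\bm{x}\in\mathbb{R}^2_1:\langle\bm{x}-\bm{a}(t),\bm{x}-\bm{a}(t)\rangle=r(t)^2\}$. An envelope of $C_{(\bm{a}(t),r(t))}$ is a smooth $f:I\to\mathbb{R}^2_1$ with $f(t)\in C_{(\bm{a}(t),r(t))}$ and $\langle\frac{df}{dt}(t),f(t)-\bm{a}(t)\rangle=0$ for all $t\in I$. *)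

From Stdlib Require Import Reals.
From Coquelicot Require Import Coquelicot.
Open Scope R_scope.

Definition vec := (R * R)%type.

Definition minner (x y : vec) : R := - fst x * fst y + snd x * snd y.

Definition vsub (x y : vec) : vec := (fst x - fst y, snd x - snd y).

Definition H1 (x : vec) : Prop := minner x x = -1.

Definition in_interval (lo hi : Rbar) (t : R) : Prop :=
  Rbar_lt lo t /\ Rbar_lt t hi.

Definition smooth_on (lo hi : Rbar) (g : R -> R) : Prop :=
  forall (n : nat) (t : R), in_interval lo hi t -> ex_derive (Derive_n g n) t.

Definition vsmooth_on (lo hi : Rbar) (g : R -> vec) : Prop :=
  smooth_on lo hi (fun s => fst (g s)) /\ smooth_on lo hi (fun s => snd (g s)).

Definition vderiv (g : R -> vec) (t : R) : vec :=
  (Derive (fun s => fst (g s)) t, Derive (fun s => snd (g s)) t).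

Definition spacelike_frontal (lo hi : Rbar) (a nu : R -> vec) : Prop :=
  vsmooth_on lo hi a /\ vsmooth_on lo hi nu /\
  (forall t, in_interval lo hi t -> H1 (nu t)) /\
  (forall t, in_interval lo hi t -> minner (vderiv a t) (nu t) = 0).

Definition pseudo_circle (c : vec) (r : R) (x : vec) : Prop :=
  minner (vsub x c) (vsub x c) = r ^ 2.

Definition is_envelope (lo hi : Rbar) (a : R -> vec) (r : R -> R) (f : R -> vec) : Prop :=
  vsmooth_on lo hi f /\
  (forall t, in_interval lo hi t -> pseudo_circle (a t) (r t) (f t)) /\
  (forall t, in_interval lo hi t -> minner (vderiv f t) (vsub (f t) (a t)) = 0).

(* Differentiating the constant radius <f - a, f - a> = c^2 and using the envelope
   condition <f', f - a> = 0 gives <a', f - a> = 0.  Frontality gives <a', nu> = 0.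
   Since f - a is spacelike and nu is timelike they form a basis of R^2_1, so a' = 0
   on I and a is constant, contradicting the hypothesis. *)
From Stdlib Require Import Reals Lra.
From Coquelicot Require Import Coquelicot.
Open Scope R_scope.

Definition vex_derive (g : R -> vec) (t : R) : Prop :=
  ex_derive (fun s => fst (g s)) t /\ ex_derive (fun s => snd (g s)) t.

Lemma minner_vsubl (x y z : vec) : minner (vsub x y) z = minner x z - minner y z.
Proof. unfold minner, vsub; simpl; ring. Qed.

Lemma Rsqr_det_minner (w n : vec) :
  (fst w * snd n - snd w * fst n) ^ 2 = minner w n ^ 2 - minner w w * minner n n.
Proof. unfold minner; ring. Qed.

Lemma minner_orthogonal_basis_eq0 (p w n : vec) :
  fst w * snd n - snd w * fst n <> 0 ->
  minner p w = 0 -> minner p n = 0 -> p = (0, 0).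
Proof.
  destruct p as [p1 p2]; unfold minner; simpl; intros Hdet Hw Hn.
  assert (Hp1 : p1 * (fst w * snd n - snd w * fst n) = 0).
  { transitivity (snd w * (- p1 * fst n + p2 * snd n) - snd n * (- p1 * fst w + p2 * snd w));
      [ring | rewrite Hw, Hn; ring]. }
  assert (Hp2 : p2 * (fst w * snd n - snd w * fst n) = 0).
  { transitivity (fst w * (- p1 * fst n + p2 * snd n) - fst n * (- p1 * fst w + p2 * snd w));
      [ring | rewrite Hw, Hn; ring]. }
  apply Rmult_integral in Hp1, Hp2.
  f_equal; [destruct Hp1 | destruct Hp2]; tauto.
Qed.

(* By [Rsqr_det_minner], a spacelike and a timelike vector have nonzero determinant. *)
Lemma minner_orthogonal_space_time_eq0 (p w n : vec) :
  minner w w * minner n n < 0 ->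
  minner p w = 0 -> minner p n = 0 -> p = (0, 0).
Proof.
  intros Hwn; apply minner_orthogonal_basis_eq0.
  intros Hdet; pose proof (Rsqr_det_minner w n) as E; rewrite Hdet in E.
  pose proof (pow2_ge_0 (minner w n)); lra.
Qed.

Lemma is_derive_minner_self (g : R -> vec) (t : R) :
  vex_derive g t ->
  is_derive (fun s => minner (g s) (g s)) t (2 * minner (vderiv g t) (g t)).
Proof.
  intros [H1 H2]; apply Derive_correct in H1, H2.
  unfold minner, vderiv; simpl.
  set (d1 := Derive _ t) in H1 |- *; set (d2 := Derive _ t) in H2 |- *.
  replace (2 * _) with (plus (plus (mult (opp d1) (fst (g t))) (mult (- fst (g t)) d1))
                             (plus (mult d2 (snd (g t))) (mult (snd (g t)) d2)))
    by (unfold plus, mult, opp; simpl; ring).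
  apply (is_derive_plus (fun s => - fst (g s) * fst (g s)) (fun s => snd (g s) * snd (g s))).
  - apply (is_derive_mult (fun s => - fst (g s))); [| exact H1 | intros; apply Rmult_comm].
    apply (is_derive_opp (fun s => fst (g s))); exact H1.
  - apply (is_derive_mult (fun s => snd (g s))); [exact H2 | exact H2 | intros; apply Rmult_comm].
Qed.

Lemma vex_derive_vsub (u v : R -> vec) (t : R) :
  vex_derive u t -> vex_derive v t -> vex_derive (fun s => vsub (u s) (v s)) t.
Proof.
  intros [Hu1 Hu2] [Hv1 Hv2]; split; apply (ex_derive_minus (V := R_NormedModule)); assumption.
Qed.

Lemma vderiv_vsub (u v : R -> vec) (t : R) :
  vex_derive u t -> vex_derive v t ->
  vderiv (fun s => vsub (u s) (v s)) t = vsub (vderiv u t) (vderiv v t).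
Proof.
  intros [Hu1 Hu2] [Hv1 Hv2]; unfold vderiv, vsub; simpl.
  f_equal; apply Derive_minus; assumption.
Qed.

Lemma in_interval_locally (lo hi : Rbar) (t : R) :
  in_interval lo hi t -> locally t (in_interval lo hi).
Proof. apply (open_and _ _ (open_Rbar_gt lo) (open_Rbar_lt hi)). Qed.

Lemma in_interval_between (lo hi : Rbar) (t1 t2 x : R) :
  in_interval lo hi t1 -> in_interval lo hi t2 ->
  Rmin t1 t2 <= x <= Rmax t1 t2 -> in_interval lo hi x.
Proof.
  intros [A1 B1] [A2 B2] [X1 X2]; split.
  - destruct (Rle_dec t1 t2).
    + rewrite Rmin_left in X1 by lra. exact (Rbar_lt_le_trans lo t1 x A1 X1).
    + rewrite Rmin_right in X1 by lra. exact (Rbar_lt_le_trans lo t2 x A2 X1).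
  - destruct (Rle_dec t1 t2).
    + rewrite Rmax_right in X2 by lra. exact (Rbar_le_lt_trans x t2 hi X2 B2).
    + rewrite Rmax_left in X2 by lra. exact (Rbar_le_lt_trans x t1 hi X2 B1).
Qed.

Lemma smooth_on_ex_derive (lo hi : Rbar) (g : R -> R) (t : R) :
  smooth_on lo hi g -> in_interval lo hi t -> ex_derive g t.
Proof. intros Hg; exact (Hg 0%nat t). Qed.

Lemma vsmooth_on_vex_derive (lo hi : Rbar) (g : R -> vec) (t : R) :
  vsmooth_on lo hi g -> in_interval lo hi t -> vex_derive g t.
Proof. intros [H1 H2] Ht; split; eapply smooth_on_ex_derive; eassumption. Qed.

Lemma Derive_eq0_const_on (lo hi : Rbar) (g : R -> R) (t1 t2 : R) :
  smooth_on lo hi g -> (forall t, in_interval lo hi t -> Derive g t = 0) ->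
  in_interval lo hi t1 -> in_interval lo hi t2 -> g t1 = g t2.
Proof.
  intros Hg Hd I1 I2.
  assert (Ibetween : forall x, Rmin t1 t2 <= x <= Rmax t1 t2 -> in_interval lo hi x)
    by (intros x; exact (in_interval_between lo hi t1 t2 x I1 I2)).
  destruct (MVT_gen g t1 t2 (fun _ => 0)) as [c [_ Hc]]; [| | lra].
  - intros x Hx; specialize (Ibetween x ltac:(lra)).
    rewrite <- (Hd x Ibetween); apply Derive_correct.
    exact (smooth_on_ex_derive _ _ _ _ Hg Ibetween).
  - intros x Hx; apply continuity_pt_filterlim, (ex_derive_continuous (V := R_NormedModule)).
    exact (smooth_on_ex_derive _ _ _ _ Hg (Ibetween x Hx)).
Qed.

Lemma vderiv_eq0_const_on (lo hi : Rbar) (g : R -> vec) (t1 t2 : R) :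
  vsmooth_on lo hi g -> (forall t, in_interval lo hi t -> vderiv g t = (0, 0)) ->
  in_interval lo hi t1 -> in_interval lo hi t2 -> g t1 = g t2.
Proof.
  intros [G1 G2] Hd I1 I2.
  rewrite (surjective_pairing (g t1)), (surjective_pairing (g t2)).
  f_equal; [apply (Derive_eq0_const_on lo hi (fun s => fst (g s))) |
             apply (Derive_eq0_const_on lo hi (fun s => snd (g s)))]; try assumption;
    intros t It; specialize (Hd t It); unfold vderiv in Hd; congruence.
Qed.

Lemma envelope_const_radius_orthogonal (lo hi : Rbar) (a f : R -> vec) (r : R -> R) (c t : R) :
  vsmooth_on lo hi a -> is_envelope lo hi a r f ->
  (forall s, in_interval lo hi s -> r s = c) -> in_interval lo hi t ->
  minner (vderiv a t) (vsub (f t) (a t)) = 0.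
Proof.
  intros Ha [Hf [Hcirc Henv]] Hr It.
  set (w := fun s => vsub (f s) (a s)).
  assert (Da := vsmooth_on_vex_derive _ _ _ _ Ha It).
  assert (Df := vsmooth_on_vex_derive _ _ _ _ Hf It).
  assert (Dw := is_derive_minner_self w t (vex_derive_vsub _ _ _ Df Da)).
  assert (Dw0 : is_derive (fun s => minner (w s) (w s)) t 0).
  { apply (is_derive_ext_loc (fun _ => c ^ 2)).
    - apply (filter_imp (in_interval lo hi)); [| exact (in_interval_locally _ _ _ It)].
      intros s Is; unfold w; rewrite <- (Hr s Is); symmetry; exact (Hcirc s Is).
    - apply (is_derive_const (V := R_NormedModule)). }
  pose proof (is_derive_unique _ _ _ Dw) as E; rewrite (is_derive_unique _ _ _ Dw0) in E.
  unfold w in E; rewrite vderiv_vsub, minner_vsubl, Henv in E by assumption.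
  lra.
Qed.

Theorem proposition1 (lo hi : Rbar) (a nu : R -> vec) (r : R -> R) :
  Rbar_lt lo hi ->
  spacelike_frontal lo hi a nu ->
  (exists c : R, 0 < c /\ forall t, in_interval lo hi t -> r t = c) ->
  (exists t1 t2 : R, in_interval lo hi t1 /\ in_interval lo hi t2 /\ a t1 <> a t2) ->
  ~ (exists f : R -> vec, is_envelope lo hi a r f).
Proof.
  intros _ [Ha [_ [Hnu Hfrontal]]] [c [Hc Hr]] [t1 [t2 [I1 [I2 Hne]]]] [f Henv].
  apply Hne, (vderiv_eq0_const_on lo hi a t1 t2 Ha); [| assumption..].
  intros t It.
  apply (minner_orthogonal_space_time_eq0 _ (vsub (f t) (a t)) (nu t)).
  - destruct Henv as [_ [Hcirc _]].
    unfold pseudo_circle in Hcirc; rewrite Hcirc, Hr, Hnu by assumption.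
    pose proof (pow_lt c 2 Hc); lra.
  - exact (envelope_const_radius_orthogonal lo hi a f r c t Ha Henv Hr It).
  - exact (Hfrontal t It).
Qed.
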